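(* If $n$ is divisible by $8$, then $\hat r_n\le\frac85$.
   Context: Equal responsibilities; chores $e_1,e_2,\ldots,e_m$. A picking order $S\in[n]^m$ allocates $A_i(S)=\{e_r:S_r=i\}$ to agent $i$. For additive $c_i\ge0$ with $c_i(e_1)\ge c_i(e_2)\ge\cdots$, $CS_i=\max\{\frac1nc_i(\{e_1,\ldots,e_m\}),c_i(e_1),c_i(e_n)+c_i(e_{n+1})\}$ (zeros beyond $m$). $r_{n,m}(S)=\sup_i\sup_{c_i}c_i(A_i(S))/CS_i$. A ridge picking order has $m\ge2n$, $S_r=r$ and $S_{n+r}=n-r+1$ for $1\le r\le n$. $\hat r_{n,m}=\min\{r_{n,m}(S):S\text{ ridge of length }m\}$, $\hat r_n=\sup_{m\ge 2n}\hat r_{n,m}$. *)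

From HB Require Import structures.
From mathcomp Require Import all_boot all_order all_algebra.
From mathcomp Require Import reals.
Set Implicit Arguments. Unset Strict Implicit. Unset Printing Implicit Defensive.
Import Order.TTheory GRing.Theory Num.Theory.
Local Open Scope ring_scope.

(* Conventions: agents are 1..n, chores/positions are 1..m (1-based, as in
   the paper).  A picking order S : [n]^m is a function nat -> nat whose
   values on positions 1..m lie in 1..n (values elsewhere are irrelevant). *)
Definition picking_order (n m : nat) (S : nat -> nat) : Prop :=
  forall r, (1 <= r <= m)%N -> (1 <= S r <= n)%N.

Definition ridge (n m : nat) (S : nat -> nat) : Prop :=
  [/\ picking_order n m S, (2 * n <= m)%N &
      forall r, (1 <= r <= n)%N -> S r = r /\ S (n + r)%N = (n - r + 1)%N].

(* An additive cost function, given by its values c(e_r), r = 1..m: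
   nonnegative and ordered c(e_1) >= c(e_2) >= ... >= c(e_m). *)
Definition cost_fn (R : realType) (m : nat) (c : nat -> R) : Prop :=
  (forall r, (1 <= r <= m)%N -> 0 <= c r) /\
  (forall r s, (1 <= r)%N -> (r <= s)%N -> (s <= m)%N -> c s <= c r).

Definition cz (R : realType) (m : nat) (c : nat -> R) (k : nat) : R :=
  if (1 <= k <= m)%N then c k else 0.

Definition bundle_cost (R : realType) (m : nat) (S : nat -> nat) (c : nat -> R)
  (i : nat) : R :=
  \sum_(1 <= r < m.+1 | S r == i) c r.

Definition CS (R : realType) (n m : nat) (c : nat -> R) : R :=
  Num.max (Num.max (n%:R^-1 * \sum_(1 <= r < m.+1) c r) (cz m c 1))
          (cz m c n + cz m c n.+1).

(* r_{n,m}(S) <= x : for every agent i and every admissible cost c_i,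
   c_i(A_i(S)) <= x * CS_i  (i.e. every ratio c_i(A_i(S))/CS_i is <= x;
   the inequality form also handles the all-zero cost, where CS_i = 0). *)
Definition ratio_le (R : realType) (n m : nat) (S : nat -> nat) (x : R) : Prop :=
  forall i, (1 <= i <= n)%N ->
  forall c : nat -> R, cost_fn m c -> bundle_cost m S c i <= x * CS n m c.

(* \hat r_{n,m} <= x : the minimum over (the finitely many) ridge orders of
   length m of r_{n,m}(S) is <= x, i.e. some ridge order S has r_{n,m}(S) <= x. *)
Definition hat_r_nm_le (R : realType) (n m : nat) (x : R) : Prop :=
  exists S, ridge n m S /\ ratio_le n m S x.

Definition hat_r_n_le (R : realType) (n : nat) (x : R) : Prop :=
  forall m, (2 * n <= m)%N -> hat_r_nm_le n m x.

From HB Require Import structures.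
From mathcomp Require Import all_boot all_order all_algebra.
From mathcomp Require Import reals.
From mathcomp Require Import zify ring.

Set Implicit Arguments.
Unset Strict Implicit.
Unset Printing Implicit Defensive.

Import Order.TTheory GRing.Theory Num.Theory.

(* Write n = 8k and split the agents into eight groups of k consecutive
   agents.  After the ridge (positions 1..16k) the order hands out blocks of
   k positions, one chore to each agent of a group, the groups following a
   pattern of period 40.  Let A, C, E be [first_weight j], [mean_weight j],
   [pair_weight j].  For an agent of group j, the number of its chores among
   the first u positions never exceeds the prefix mass of the weight placing
   A/40 on e_1, C/(40k) on every chore and E/40 on each of e_n, e_(n+1).  As
   costs are nonnegative and nonincreasing, Abel summation turns this into
     c(A_i) <= A/40 c(e_1) + C/5 c(all)/n + E/40 (c(e_n) + c(e_(n+1))),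
   which is at most (A + 8 C + E)/40 CS = 8/5 CS. *)

Definition tail_pattern : seq nat :=
  [:: 5; 6; 7; 4; 5; 3; 2; 6; 7; 4; 5; 1; 0; 7; 6; 5; 3; 4; 2; 5;
      7; 6; 4; 1; 0; 5; 3; 2; 6; 7; 4; 5; 7; 6; 5; 3; 4; 2; 1; 0].

Definition tail_group (b : nat) : nat := nth 0 tail_pattern (b %% 40).

Definition group_blocks (j B : nat) : nat :=
  count (fun b => tail_group b == j) (iota 0 B).

Definition first_weight (j : nat) : nat := nth 0 [:: 40; 37; 32; 28; 16; 0; 4; 0] j.
Definition mean_weight (j : nat) : nat := nth 0 [:: 3; 3; 4; 4; 6; 8; 6; 6] j.
Definition pair_weight (j : nat) : nat := nth 0 [:: 0; 3; 0; 4; 0; 0; 12; 16] j.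

Lemma tail_group_lt8 b : tail_group b < 8.
Proof.
rewrite /tail_group; have : b %% 40 < 40 by rewrite ltn_mod.
by move: (b %% 40); do 40! case=> //.
Qed.

(* An agent of group [j] gets its two ridge chores after positions [j k]
   and [(15 - j) k]; [mean_weight j] is also its number of blocks per period. *)
Lemma weights_table j : j < 8 ->
  [/\ 40 <= first_weight j + mean_weight j * j,
      80 + mean_weight j * j <= first_weight j + 15 * mean_weight j + 2 * pair_weight j,
      first_weight j + 8 * mean_weight j + pair_weight j = 64 &
      group_blocks j 40 = mean_weight j].
Proof. by do 8! case: j => [//|j]. Qed.

Lemma group_blocksD40 j B : group_blocks j (40 + B) = group_blocks j 40 + group_blocks j B.
Proof.
rewrite /group_blocks iotaD count_cat (iotaDl 40 0) count_map.
by congr (_ + _); apply: eq_count => b; rewrite /= /tail_group modnDl.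
Qed.

Lemma group_blocks_bound j B : j < 8 ->
  40 * (2 + group_blocks j B.+1) <= first_weight j + 2 * pair_weight j + mean_weight j * (16 + B).
Proof.
move=> j_lt8; elim/ltn_ind: B => B IH.
have [B_lt40 | B_ge40] := ltnP B 40.
  (* The first period is checked by computation, the others follow by periodicity. *)
  have first_period : all (fun j => all (fun B =>
      40 * (2 + group_blocks j B.+1) <= first_weight j + 2 * pair_weight j + mean_weight j * (16 + B))
      (iota 0 40)) (iota 0 8) by vm_compute.
  have /allP/(_ B) := allP first_period j ltac:(rewrite mem_iota; lia).
  by apply; rewrite mem_iota.
have [_ _ _ period] := weights_table j_lt8.
have := IH (B - 40) ltac:(lia).
have -> : B.+1 = 40 + (B - 40).+1 by lia.
rewrite group_blocksD40 period; nia.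
Qed.

Definition tail_agent (k q : nat) : nat := tail_group (q %/ k) * k + q %% k + 1.

Definition ridge_order (k p : nat) : nat :=
  if p <= 8 * k then p
  else if p <= 16 * k then 16 * k + 1 - p
  else tail_agent k (p - 16 * k - 1).

Definition agent_count (k i u : nat) : nat :=
  count (fun p => ridge_order k p == i) (iota 1 u).

Lemma ridge_order_range k p : 0 < k -> 1 <= p -> 1 <= ridge_order k p <= 8 * k.
Proof.
move=> k_gt0 p_gt0; rewrite /ridge_order /tail_agent.
case: ifP => p_front; first lia.
case: ifP => p_middle; first lia.
have := tail_group_lt8 ((p - 16 * k - 1) %/ k).
have : (p - 16 * k - 1) %% k < k by rewrite ltn_mod.
move: (tail_group _) ((p - 16 * k - 1) %% k) => g r r_lt g_lt.
have : g * k <= 7 * k by rewrite leq_mul2r; lia.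
lia.
Qed.

Lemma ridge_order_ridge k m : 0 < k -> 16 * k <= m -> ridge (8 * k) m (ridge_order k).
Proof.
move=> k_gt0 km; split=> [p /andP[p_gt0 _] | | r r_range].
- exact: ridge_order_range.
- lia.
rewrite /ridge_order ifT; last lia.
by rewrite ifF ?ifT; lia.
Qed.

Lemma agent_countS k i u :
  agent_count k i u.+1 = agent_count k i u + (ridge_order k u.+1 == i).
Proof. by rewrite /agent_count -(addn1 u) iotaD count_cat /= addn0 add1n addn1. Qed.

Lemma agent_count_front k i u : 1 <= i <= 8 * k -> u <= 16 * k ->
  agent_count k i u = (i <= u) + (16 * k + 1 - i <= u).
Proof.
move=> i_range; elim: u => [|u IH] u_le; first by rewrite /agent_count /=; lia.
rewrite agent_countS IH; last lia.
rewrite /ridge_order; case: ifP => [u_front | u_back]; first by case: eqP; lia.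
by rewrite ifT; [case: eqP; lia | lia].
Qed.

Lemma agent_count_tail k i Q :
  agent_count k i (16 * k + Q) =
  agent_count k i (16 * k) + count (fun q => tail_agent k q == i) (iota 0 Q).
Proof.
rewrite /agent_count iotaD count_cat -(addn0 (1 + 16 * k)) iotaDl count_map.
congr (_ + _); apply: eq_count => q /=.
rewrite /ridge_order !ifF; try lia.
by have -> : 1 + 16 * k + q - 16 * k - 1 = q by lia.
Qed.

Lemma tail_agent_eq k j r q : r < k ->
  (tail_agent k q == (j * k + r).+1) = (tail_group (q %/ k) == j) && (q %% k == r).
Proof.
move=> r_lt; have k_gt0 : 0 < k by lia.
rewrite /tail_agent addn1 eqSS; apply/eqP/andP => [eq_jr | [/eqP <- /eqP <-] //].
have qr_lt : q %% k < k by rewrite ltn_mod.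
split.
  by have := congr1 (divn^~ k) eq_jr; rewrite /= !divnMDl // (divn_small qr_lt) (divn_small r_lt) !addn0 => ->.
by have := congr1 (modn^~ k) eq_jr; rewrite /= !modnMDl (modn_small qr_lt) (modn_small r_lt) => ->.
Qed.

(* The blocks containing the tail positions of one agent are pairwise distinct. *)
Lemma tail_count_le k j r Q : r < k ->
  count (fun q => tail_agent k q == (j * k + r).+1) (iota 0 Q) <= group_blocks j (Q %/ k).+1.
Proof.
move=> r_lt; have k_gt0 : 0 < k by lia.
rewrite -size_filter /group_blocks -size_filter -(size_map (divn^~ k)).
apply: uniq_leq_size.
  rewrite map_inj_in_uniq ?filter_uniq ?iota_uniq // => x y.
  rewrite !mem_filter !tail_agent_eq // => /andP[/andP[_ /eqP xr] _] /andP[/andP[_ /eqP yr] _] xy.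
  by rewrite (divn_eq x k) (divn_eq y k) xy xr yr.
move=> b /mapP[q]; rewrite mem_filter tail_agent_eq // mem_iota => /and3P[/andP[gq _] _ qQ] ->.
by rewrite mem_filter gq mem_iota ltnS leq_div2r // ltnW.
Qed.

Lemma agent_count_bound k j r u : j < 8 -> r < k ->
  40 * k * agent_count k (j * k + r).+1 u <=
  k * first_weight j + mean_weight j * u + k * pair_weight j * ((8 * k <= u) + (8 * k < u)).
Proof.
move=> j_lt8 r_lt; have k_gt0 : 0 < k by lia.
have jk_le : j * k <= 7 * k by rewrite leq_mul2r; lia.
have [first_ok pair_ok _ _] := weights_table j_lt8.
have := leq_mul first_ok (leqnn k); have := leq_mul pair_ok (leqnn k).
have := fun B => leq_mul (group_blocks_bound B j_lt8) (leqnn k).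
move: (first_weight j) (mean_weight j) (pair_weight j) => A C E blocks_k pair_k first_k.
have [u_le | u_gt] := leqP u (16 * k).
  rewrite agent_count_front //; last lia.
  have [agent_le | agent_gt] := leqP (j * k + r).+1 u; last first.
    by rewrite (_ : (16 * k + 1 - (j * k + r).+1 <= u) = false) ?muln0 //; lia.
  have /(leq_mul (leqnn C)) : j * k <= u by lia.
  have [mirror_le | mirror_gt] := leqP (16 * k + 1 - (j * k + r).+1) u; last first.
    by move: (_ + (8 * k < u)) => w; lia.
  have -> : 8 * k <= u by lia.
  have -> : 8 * k < u by lia.
  move=> _; have /(leq_mul (leqnn C)) : 15 * k <= u + j * k by lia.
  by move=> mirror_C; clear -mirror_C pair_k; lia.
have -> : 8 * k <= u by lia.
have -> : 8 * k < u by lia.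
have front : agent_count k (j * k + r).+1 (16 * k) = 2.
  have agent_le : (j * k + r).+1 <= 16 * k by lia.
  have mirror_le : 16 * k + 1 - (j * k + r).+1 <= 16 * k by lia.
  by rewrite agent_count_front ?agent_le ?mirror_le //; lia.
have tail_le := tail_count_le j (u - 16 * k) r_lt.
rewrite -[in agent_count _ _ u](subnKC (ltnW u_gt)) agent_count_tail front.
have := blocks_k ((u - 16 * k) %/ k); have := divn_eq (u - 16 * k) k.
have -> : u = 16 * k + (u - 16 * k) by lia.
rewrite addKn; move: (u - 16 * k) tail_le => Q.
move: (count _ _) => t /(leq_mul (leqnn k)) tail_le.
move: (Q %/ k) (Q %% k) tail_le => B r' tail_le -> blocks.
clear -tail_le blocks; lia.
Qed.

Local Open Scope ring_scope.

Lemma ler_abel_sum (R : numDomainType) m (c f g : nat -> R) :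
  (forall r, (1 <= r <= m)%N -> 0 <= c r) ->
  (forall r s, (1 <= r)%N -> (r <= s)%N -> (s <= m)%N -> c s <= c r) ->
  (forall u, (1 <= u <= m)%N -> \sum_(1 <= p < u.+1) f p <= \sum_(1 <= p < u.+1) g p) ->
  \sum_(1 <= p < m.+1) c p * f p <= \sum_(1 <= p < m.+1) c p * g p.
Proof.
move=> c_ge0 c_noninc fg.
pose D u := \sum_(1 <= p < u.+1) (g p - f p).
have D_ge0 u : (u <= m)%N -> 0 <= D u.
  case: u => [|u] u_le; first by rewrite /D big_geq.
  by rewrite /D sumrB subr_ge0 fg //; lia.
have abel u : (u <= m)%N -> c u * D u <= \sum_(1 <= p < u.+1) c p * (g p - f p).
  elim: u => [|u IH] u_le; first by rewrite /D !big_geq // mulr0.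
  rewrite /D big_nat_recr //= [X in _ <= X]big_nat_recr //= -/(D u) mulrDr lerD2r.
  apply: le_trans (IH (ltnW u_le)).
  have [->|u_gt0] := posnP u; first by rewrite /D big_geq // !mulr0.
  by apply: ler_wpM2r; [exact: D_ge0 (ltnW u_le) | apply: c_noninc; lia].
rewrite -subr_ge0 -sumrB.
under eq_bigr do rewrite -mulrBr.
have [->|m_gt0] := posnP m; first by rewrite big_geq.
apply: le_trans (abel m (leqnn m)).
by apply: mulr_ge0; [apply: c_ge0; lia | exact: D_ge0].
Qed.

Lemma sum_mul_indicator (R : pzSemiRingType) (F : nat -> R) (P : pred nat) m u :
  \sum_(m <= p < u) F p * (P p)%:R = \sum_(m <= p < u | P p) F p.
Proof.
rewrite [RHS]big_mkcond; apply: eq_big => // p _.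
by case: (P p); rewrite ?mulr1 ?mulr0.
Qed.

Lemma sum_nat_count (R : pzSemiRingType) (P : pred nat) u :
  \sum_(1 <= p < u.+1) (P p)%:R = (count P (iota 1 u))%:R :> R.
Proof.
rewrite -natr_sum -sum1_count /index_iota subSS subn0.
by congr (_%:R); rewrite [RHS]big_mkcond; apply: eq_bigr => p _; case: (P p).
Qed.

Section Majorant.
Variables (R : numFieldType) (n : nat) (a b e : R).

Definition majorant (p : nat) : R :=
  a * (p == 1)%:R + b / n%:R + e * (p == n)%:R + e * (p == n.+1)%:R.

Lemma sum_mul_majorant (F : nat -> R) u :
  \sum_(1 <= p < u.+1) F p * majorant p =
  a * (if (1 <= 1 < u.+1)%N then F 1 else 0) + b / n%:R * \sum_(1 <= p < u.+1) F p +
  e * (if (1 <= n < u.+1)%N then F n else 0) + e * (if (1 <= n.+1 < u.+1)%N then F n.+1 else 0).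
Proof.
rewrite (eq_bigr (fun p => a * (F p * (p == 1)%:R) + b / n%:R * F p
  + e * (F p * (p == n)%:R) + e * (F p * (p == n.+1)%:R))); last by move=> p _; rewrite /majorant; ring.
by rewrite !big_split /= -!mulr_sumr !sum_mul_indicator !big_nat1_eq.
Qed.

Lemma sum_majorant u : (0 < n)%N -> (0 < u)%N ->
  \sum_(1 <= p < u.+1) majorant p = a + b * u%:R / n%:R + e * ((n <= u)%:R + (n < u)%:R).
Proof.
move=> n_gt0 u_gt0; under eq_bigr do rewrite -[majorant _]mul1r.
rewrite sum_mul_majorant sumr_const_nat subn1 /= !ltnS u_gt0 n_gt0 /=.
by case: (n <= u)%N; case: (n < u)%N; rewrite /=; ring.
Qed.

End Majorant.

Lemma sum_mul_majorant_le_CS (R : realType) n m (a b e : R) (c : nat -> R) :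
  (0 < n)%N -> (n < m)%N -> 0 <= a -> 0 <= b -> 0 <= e ->
  \sum_(1 <= p < m.+1) c p * majorant n a b e p <= (a + b + e) * CS n m c.
Proof.
move=> n_gt0 n_lt_m a_ge0 b_ge0 e_ge0.
rewrite sum_mul_majorant /CS /cz !ifT; try lia.
set M := Num.max _ _.
have first_le : c 1%N <= M by rewrite /M !le_max lexx orbT.
have mean_le : n%:R^-1 * \sum_(1 <= p < m.+1) c p <= M by rewrite /M !le_max lexx.
have pair_le : c n + c n.+1 <= M by rewrite /M le_max lexx orbT.
rewrite -mulrA -addrA -mulrDr !mulrDl.
by apply: lerD; [apply: lerD |]; apply: ler_wpM2l.
Qed.

Lemma agent_count_le_majorant (R : numFieldType) k j r u : (j < 8)%N -> (r < k)%N -> (0 < u)%N ->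
  (agent_count k (j * k + r).+1 u)%:R <= \sum_(1 <= p < u.+1)
    majorant (8 * k) ((first_weight j)%:R / 40) ((mean_weight j)%:R / 5) ((pair_weight j)%:R / 40) p :> R.
Proof.
move=> j_lt8 r_lt u_gt0; have k_gt0 : (0 < k)%N by lia.
rewrite sum_majorant ?muln_gt0 //.
have := agent_count_bound u j_lt8 r_lt; rewrite -(ler_nat R) !(natrD, natrM).
move: (agent_count _ _ _) (first_weight j) (mean_weight j) (pair_weight j) => N A C E bound.
have k_neq0 : k%:R != 0 :> R by rewrite pnatr_eq0 -lt0n.
rewrite -(ler_pM2l (_ : 0 < 40 * k%:R)) ?mulr_gt0 ?ltr0n //.
apply: le_trans bound _; rewrite le_eqVlt; apply/orP; left; apply/eqP.
by field.
Qed.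

Lemma weights_total (R : numFieldType) j : (j < 8)%N ->
  (first_weight j)%:R / 40 + (mean_weight j)%:R / 5 + (pair_weight j)%:R / 40 = 8 / 5 :> R.
Proof.
move=> j_lt8; have [_ _ total _] := weights_table j_lt8.
have : (first_weight j + 8 * mean_weight j + pair_weight j)%:R = 64 :> R by rewrite total.
rewrite !(natrD, natrM) => total_R.
transitivity (((first_weight j)%:R + 8 * (mean_weight j)%:R + (pair_weight j)%:R) / 40 : R).
  by field.
by rewrite total_R; field.
Qed.

Theorem lemma6 (R : realType) (n : nat) :
  (0 < n)%N -> (8 %| n)%N -> hat_r_n_le n (8 / 5 : R).
Proof.
move=> n_gt0 /dvdnP[k n_eq] m m_ge; subst n; rewrite [(k * 8)%N]mulnC in n_gt0 m_ge *.
have k_gt0 : (0 < k)%N by lia.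
exists (ridge_order k); split; first by apply: ridge_order_ridge; lia.
move=> [//|a] /andP[_ a_lt] c [c_ge0 c_noninc].
case: (edivnP a k) a_lt => j r -> /implyP/(_ k_gt0) r_lt a_lt.
have j_lt8 : (j < 8)%N by rewrite -(ltn_pmul2r k_gt0); lia.
rewrite -(weights_total R j_lt8) /bundle_cost -sum_mul_indicator.
apply: le_trans (ler_abel_sum c_ge0 c_noninc _) _.
  by move=> u /andP[u_gt0 _]; rewrite sum_nat_count; exact: agent_count_le_majorant.
by apply: sum_mul_majorant_le_CS; rewrite ?divr_ge0 ?ler0n //; lia.
Qed.
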